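(* Let $\Phi_1,\Phi_2$ be doubling Young functions such that $\int^\infty\frac{dt}{\Phi_i(t)}<\infty$ for $i=1,2$. Then there exists a doubling Young function $\Phi$ with the following properties: - $\Phi(t)\le\min\{\Phi_1(t),\Phi_2(t)\}$ for all $t$; - $\int^\infty\frac{dt}{\Phi(t)}<\infty$; - there exists $c>0$ such that $\Phi(t)\ge c\min\{\Phi_1(t),\Phi_2(t)\}$ for all sufficiently large $t$.
   Context: A Young function is a convex increasing function $\Phi:[0,\infty)\to[0,\infty)$ with $\Phi(0)=0$. It is doubling if there is $C<\infty$ with $\Phi(2t)\le C\Phi(t)$ for all sufficiently large $t$. *)

From Stdlib Require Import Reals.
From Coquelicot Require Import Coquelicot.
Open Scope R_scope.

(* A Young function: convex, (non-strictly) increasing map [0,oo) -> [0,oo)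
   with Phi 0 = 0.  Phi is given as a total function R -> R; only its values
   on [0,oo) matter. *)
Definition young (Phi : R -> R) : Prop :=
  Phi 0 = 0 /\
  (forall t, 0 <= t -> 0 <= Phi t) /\
  (forall s t, 0 <= s -> s <= t -> Phi s <= Phi t) /\
  (forall s t l, 0 <= s -> 0 <= t -> 0 <= l <= 1 ->
     Phi (l * s + (1 - l) * t) <= l * Phi s + (1 - l) * Phi t).

Definition doubling (Phi : R -> R) : Prop :=
  exists C T : R, forall t, T <= t -> Phi (2 * t) <= C * Phi t.

Definition integrable_at_infty_inv (Phi : R -> R) : Prop :=
  exists a : R, 0 <= a /\ (forall t, a <= t -> 0 < Phi t) /\
    ex_RInt_gen (fun t => / Phi t) (at_point a) (Rbar_locally p_infty).

(** The infimal convolution [Phi t = inf_{0 <= s <= t} (Phi1 s + Phi2 (t - s))]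
    of two Young functions is again a Young function, and it is squeezed
    between [min Phi1 Phi2] at [t/2] and at [t]: one of [s], [t - s] is at
    least [t/2], and the choices [s = 0], [s = t] give the upper bound.
    Doubling of [min Phi1 Phi2] (inherited from [Phi1] and [Phi2]) thus makes
    [Phi] comparable to [min Phi1 Phi2] near infinity, whence [Phi] is
    doubling and [1 / Phi <= K (1 / Phi1 + 1 / Phi2)] is integrable. *)

From Stdlib Require Import Reals Lra Psatz Classical_Pred_Type.
From Coquelicot Require Import Coquelicot.
Open Scope R_scope.

Lemma Rmin_le_scal_Rmin a b c d K :
  a <= K * c -> b <= K * d -> Rmin a b <= K * Rmin c d.
Proof.
  intros Hac Hbd. unfold Rmin at 2. destruct Rle_dec.
  - eapply Rle_trans; [apply Rmin_l | exact Hac].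
  - eapply Rle_trans; [apply Rmin_r | exact Hbd].
Qed.

Lemma Rinv_le_of_Rmin_le p q1 q2 K :
  0 < p -> 0 < q1 -> 0 < q2 -> Rmin q1 q2 <= K * p -> / p <= K * (/ q1 + / q2).
Proof.
  intros Hp Hq1 Hq2 Hmin.
  assert (Hm : 0 < Rmin q1 q2) by (apply Rmin_pos; assumption).
  assert (HK : 0 < K) by nra.
  assert (Hinv_min : / Rmin q1 q2 <= / q1 + / q2).
  { pose proof (Rinv_0_lt_compat q1 Hq1); pose proof (Rinv_0_lt_compat q2 Hq2).
    unfold Rmin; destruct Rle_dec; lra. }
  assert (Hinv : / (K * p) <= / Rmin q1 q2) by (apply Rinv_le_contravar; assumption).
  rewrite Rinv_mult in Hinv.
  replace (/ p) with (K * (/ K * / p)) by (field; lra).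
  apply Rmult_le_compat_l; lra.
Qed.

(* Convexity between [y] and [2 B] bounds the slope on [[0, B]] by [P (2 B) / B]. *)
Lemma young_increment_le (P : R -> R) B y z : young P ->
  0 < B -> 0 <= y <= z -> z <= B -> P z - P y <= (z - y) * (P (2 * B) / B).
Proof.
  intros [_ [Pnn [_ Pconv]]] HB Hyz HzB.
  set (l := (2 * B - z) / (2 * B - y)).
  assert (Hl : 0 <= l <= 1) by (unfold l; split;
    [apply Rdiv_le_0_compat | apply Rle_div_l]; lra).
  assert (Hz : z = l * y + (1 - l) * (2 * B)) by (unfold l; field; lra).
  assert (H1l : 1 - l = (z - y) / (2 * B - y)) by (unfold l; field; lra).
  pose proof (Pconv y (2 * B) l ltac:(lra) ltac:(lra) Hl) as Hconv.
  rewrite <- Hz, H1l in Hconv.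
  pose proof (Pnn y ltac:(lra)). pose proof (Pnn (2 * B) ltac:(lra)).
  assert (Hslope : (z - y) / (2 * B - y) <= (z - y) / B).
  { apply Rmult_le_compat_l; [lra|]. apply Rinv_le_contravar; lra. }
  replace ((z - y) * (P (2 * B) / B)) with ((z - y) / B * P (2 * B)) by (field; lra).
  nra.
Qed.

Lemma young_continuity_pt (P : R -> R) x : young P -> 0 < x -> continuity_pt P x.
Proof.
  intros HY Hx. pose proof HY as [_ [Pnn [Pmono _]]].
  set (L := P (2 * (2 * x)) / (2 * x)).
  assert (HL : 0 <= L) by (apply Rdiv_le_0_compat; [apply Pnn|]; lra).
  intros eps Heps.
  exists (Rmin x (eps / (L + 1))). split.
  { apply Rmin_pos; [lra | apply Rdiv_lt_0_compat; lra]. }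
  simpl; unfold R_dist. intros y [_ Hy].
  assert (Hyx := Rlt_le_trans _ _ _ Hy (Rmin_l _ _)).
  assert (Hyeps := Rlt_le_trans _ _ _ Hy (Rmin_r _ _)).
  apply Rabs_def2 in Hyx.
  assert (Hclose : Rabs (y - x) * (L + 1) < eps).
  { apply Rlt_le_trans with (eps / (L + 1) * (L + 1)).
    - apply Rmult_lt_compat_r; lra.
    - right; field; lra. }
  pose proof (Rabs_pos (y - x)).
  destruct (Rle_dec x y) as [Hxy | Hxy].
  - pose proof (young_increment_le P (2 * x) x y HY ltac:(lra) ltac:(lra) ltac:(lra)) as Hinc.
    pose proof (Pmono x y ltac:(lra) Hxy). fold L in Hinc.
    rewrite Rabs_right in * by lra. nra.
  - pose proof (young_increment_le P (2 * x) y x HY ltac:(lra) ltac:(lra) ltac:(lra)) as Hinc.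
    pose proof (Pmono y x ltac:(lra) ltac:(lra)). fold L in Hinc.
    rewrite Rabs_left1 in * by lra. nra.
Qed.

Lemma ex_RInt_inv_young (P : R -> R) u v : young P -> 0 <= u -> u <= v ->
  (forall t, u <= t <= v -> 0 < P t) -> ex_RInt (fun t => / P t) u v.
Proof.
  intros HY Hu Huv Hpos.
  assert (Hu0 : 0 < u).
  { destruct (Req_dec u 0) as [Hu0 | Hu0]; [|lra].
    pose proof (Hpos u ltac:(lra)). destruct HY as [P0 _]. subst. lra. }
  apply ex_RInt_Reals_1, continuity_implies_RiemannInt; [exact Huv|].
  intros x Hx. apply continuity_pt_inv.
  - apply young_continuity_pt; [exact HY | lra].
  - apply Rgt_not_eq, Hpos; lra.
Qed.

Lemma RInt_le_is_RInt_gen (g : R -> R) a l :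
  (forall t, a <= t -> 0 <= g t) -> (forall b, a <= b -> ex_RInt g a b) ->
  is_RInt_gen g (at_point a) (Rbar_locally p_infty) l ->
  forall b, a <= b -> RInt g a b <= l.
Proof.
  intros Hnn Hex Hg b Hab.
  destruct (Rle_dec (RInt g a b) l) as [Hle | Hgt]; [exact Hle | exfalso].
  assert (Heps : 0 < RInt g a b - l) by lra.
  destruct (Hg _ (locally_ball l (mkposreal _ Heps))) as [Q S HQ [M HM] HQS].
  set (y := Rmax M b + 1).
  assert (HMy : M < y) by (pose proof (Rmax_l M b); unfold y; lra).
  assert (Hby : b < y) by (pose proof (Rmax_r M b); unfold y; lra).
  destruct (HQS a y HQ (HM y HMy)) as [v [Hv Hball]]; simpl in Hv, Hball.
  rewrite <- (is_RInt_unique _ _ _ _ Hv) in Hball.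
  apply Rabs_def2 in Hball.
  assert (Hexy := Hex y ltac:(lra)).
  assert (Hexby := ex_RInt_Chasles_2 g a b y ltac:(lra) Hexy).
  pose proof (RInt_Chasles g a b y (Hex b Hab) Hexby) as Hsplit.
  pose proof (RInt_ge_0 g b y ltac:(lra) Hexby (fun x Hx => Hnn x ltac:(lra))).
  change plus with Rplus in Hsplit. unfold minus, plus, opp in Hball; simpl in Hball. lra.
Qed.

(* The partial integrals increase to their supremum. *)
Lemma ex_RInt_gen_of_RInt_bounded (f : R -> R) a M :
  (forall t, a <= t -> 0 <= f t) -> (forall b, a <= b -> ex_RInt f a b) ->
  (forall b, a <= b -> RInt f a b <= M) ->
  ex_RInt_gen f (at_point a) (Rbar_locally p_infty).
Proof.
  intros Hnn Hex HM.
  set (E := fun y => exists b, a <= b /\ y = RInt f a b).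
  assert (HEbound : bound E) by (exists M; intros y [b [Hb ->]]; auto).
  assert (HEne : exists y, E y) by (exists (RInt f a a), a; split; [lra | reflexivity]).
  destruct (completeness E HEbound HEne) as [L [HLub HLleast]].
  assert (Hmono : forall b c, a <= b -> b <= c -> RInt f a b <= RInt f a c).
  { intros b c Hab Hbc.
    assert (Hexbc := ex_RInt_Chasles_2 f a b c ltac:(lra) (Hex c ltac:(lra))).
    rewrite <- (RInt_Chasles f a b c (Hex b Hab) Hexbc).
    pose proof (RInt_ge_0 f b c Hbc Hexbc (fun x Hx => Hnn x ltac:(lra))).
    change plus with Rplus. lra. }
  exists L. intros P [eps Heps].
  assert (Hb0 : exists b0, a <= b0 /\ L - eps < RInt f a b0).
  { apply not_all_not_ex. intros Hnone.
    assert (L <= L - eps); [|destruct eps; simpl in *; lra].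
    apply HLleast. intros y [b [Hab ->]].
    destruct (Rle_dec (RInt f a b) (L - eps)) as [Hle | Hgt]; [exact Hle|].
    exfalso; apply (Hnone b); split; [exact Hab | lra]. }
  destruct Hb0 as [b0 [Hab0 Hlt]].
  apply (Filter_prod _ _ _ (fun x => x = a) (fun y => b0 < y));
    [reflexivity | exists b0; auto |].
  intros x y -> Hy. exists (RInt f a y). split.
  - apply (RInt_correct (V := R_CompleteNormedModule)), Hex; lra.
  - apply Heps. change (Rabs (RInt f a y - L) < eps).
    assert (HyL : RInt f a y <= L) by (apply HLub; exists y; split; [lra | reflexivity]).
    pose proof (Hmono b0 y Hab0 ltac:(lra)).
    rewrite Rabs_left1 by lra. lra.
Qed.

Lemma ex_RInt_gen_le_compat (f g : R -> R) a :
  (forall t, a <= t -> 0 <= f t <= g t) ->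
  (forall b, a <= b -> ex_RInt f a b) -> (forall b, a <= b -> ex_RInt g a b) ->
  ex_RInt_gen g (at_point a) (Rbar_locally p_infty) ->
  ex_RInt_gen f (at_point a) (Rbar_locally p_infty).
Proof.
  intros Hfg Hexf Hexg [l Hl].
  apply (ex_RInt_gen_of_RInt_bounded f a l); [intros t Ht; apply Hfg, Ht | exact Hexf |].
  intros b Hab.
  apply Rle_trans with (RInt g a b).
  - apply RInt_le; [exact Hab | apply Hexf, Hab | apply Hexg, Hab |].
    intros x Hx; apply Hfg; lra.
  - apply (RInt_le_is_RInt_gen g a l); [|exact Hexg | exact Hl | exact Hab].
    intros t Ht; pose proof (Hfg t Ht); lra.
Qed.

Lemma ex_RInt_gen_infty_shift (f : R -> R) a0 a : ex_RInt f a a0 ->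
  ex_RInt_gen f (at_point a0) (Rbar_locally p_infty) ->
  ex_RInt_gen f (at_point a) (Rbar_locally p_infty).
Proof.
  intros Hex Hgen. apply (ex_RInt_gen_Chasles f a0); [|exact Hgen].
  destruct Hex as [l Hl]. exists l. apply is_RInt_gen_at_point, Hl.
Qed.

Lemma Glb_Rbar_finite (E : R -> Prop) y0 m :
  E y0 -> (forall y, E y -> m <= y) -> Glb_Rbar E = Finite (real (Glb_Rbar E)).
Proof.
  intros Hy0 Hm. destruct (Glb_Rbar_correct E) as [Hlb Hglb].
  destruct (Glb_Rbar E) as [r | |]; [reflexivity | |]; exfalso.
  - exact (Hlb y0 Hy0).
  - exact (Hglb (Finite m) Hm).
Qed.

Section InfimalConvolution.

Variables P1 P2 : R -> R.
Hypotheses (Y1 : young P1) (Y2 : young P2).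

Definition infconv_values (t y : R) : Prop :=
  exists s, 0 <= s <= t /\ y = P1 s + P2 (t - s).

Definition infconv (t : R) : R := real (Glb_Rbar (infconv_values t)).

Lemma infconv_is_glb t : 0 <= t -> is_glb_Rbar (infconv_values t) (infconv t).
Proof.
  intros Ht. unfold infconv.
  rewrite <- (Glb_Rbar_finite _ (P1 t + P2 (t - t)) 0); [apply Glb_Rbar_correct| |].
  - exists t; split; [lra | reflexivity].
  - intros y [s [Hs ->]].
    pose proof (proj1 (proj2 Y1) s ltac:(lra)).
    pose proof (proj1 (proj2 Y2) (t - s) ltac:(lra)). lra.
Qed.

Lemma infconv_le t s : 0 <= s <= t -> infconv t <= P1 s + P2 (t - s).
Proof.
  intros Hs. apply (proj1 (infconv_is_glb t ltac:(lra))). exists s; split; [lra | reflexivity].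
Qed.

Lemma infconv_ge t m : 0 <= t ->
  (forall s, 0 <= s <= t -> m <= P1 s + P2 (t - s)) -> m <= infconv t.
Proof.
  intros Ht Hm. apply (proj2 (infconv_is_glb t Ht) (Finite m)).
  intros y [s [Hs ->]]. apply Hm, Hs.
Qed.

Lemma infconv_ge_affine t l m c : 0 <= t -> 0 <= l ->
  (forall s, 0 <= s <= t -> m <= l * (P1 s + P2 (t - s)) + c) -> m <= l * infconv t + c.
Proof.
  intros Ht Hl Hm. destruct (Req_dec l 0) as [-> | Hl0].
  - pose proof (Hm t ltac:(lra)). lra.
  - assert ((m - c) / l <= infconv t).
    { apply infconv_ge; [exact Ht|]. intros s Hs.
      apply Rle_div_l; [lra|]. pose proof (Hm s Hs). lra. }
    replace m with (l * ((m - c) / l) + c) by (field; lra).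
    apply Rplus_le_compat_r, Rmult_le_compat_l; lra.
Qed.

Lemma infconv_nonneg t : 0 <= t -> 0 <= infconv t.
Proof.
  intros Ht. apply infconv_ge; [exact Ht|]. intros s Hs.
  pose proof (proj1 (proj2 Y1) s ltac:(lra)).
  pose proof (proj1 (proj2 Y2) (t - s) ltac:(lra)). lra.
Qed.

Lemma infconv_le_Rmin t : 0 <= t -> infconv t <= Rmin (P1 t) (P2 t).
Proof.
  intros Ht. destruct Y1 as [P10 _], Y2 as [P20 _]. apply Rmin_glb.
  - pose proof (infconv_le t t ltac:(lra)). replace (t - t) with 0 in * by ring. lra.
  - pose proof (infconv_le t 0 ltac:(lra)). replace (t - 0) with t in * by ring. lra.
Qed.

Lemma infconv_ge_Rmin_half t : 0 <= t -> Rmin (P1 (t / 2)) (P2 (t / 2)) <= infconv t.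
Proof.
  intros Ht. destruct Y1 as [_ [N1 [M1 _]]], Y2 as [_ [N2 [M2 _]]].
  apply infconv_ge; [exact Ht|]. intros s Hs.
  pose proof (Rmin_l (P1 (t / 2)) (P2 (t / 2))). pose proof (Rmin_r (P1 (t / 2)) (P2 (t / 2))).
  destruct (Rle_dec (t / 2) s).
  - pose proof (M1 (t / 2) s ltac:(lra) ltac:(lra)). pose proof (N2 (t - s) ltac:(lra)). lra.
  - pose proof (M2 (t / 2) (t - s) ltac:(lra) ltac:(lra)). pose proof (N1 s ltac:(lra)). lra.
Qed.

Lemma infconv_le_increasing s t : 0 <= s -> s <= t -> infconv s <= infconv t.
Proof.
  intros Hs Hst. destruct Y1 as [_ [N1 [M1 _]]], Y2 as [_ [N2 [M2 _]]].
  apply infconv_ge; [lra|]. intros x Hx. destruct (Rle_dec x s).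
  - pose proof (infconv_le s x ltac:(lra)).
    pose proof (M2 (s - x) (t - x) ltac:(lra) ltac:(lra)). lra.
  - pose proof (infconv_le_Rmin s Hs). pose proof (Rmin_l (P1 s) (P2 s)).
    pose proof (M1 s x ltac:(lra) ltac:(lra)). pose proof (N2 (t - x) ltac:(lra)). lra.
Qed.

(* Convexity: minimise separately over the splittings of [s] and of [t]; the
   convex combination of the two splittings is a splitting of the combined point. *)
Lemma infconv_convex s t l : 0 <= s -> 0 <= t -> 0 <= l <= 1 ->
  infconv (l * s + (1 - l) * t) <= l * infconv s + (1 - l) * infconv t.
Proof.
  intros Hs Ht Hl. destruct Y1 as [_ [_ [_ C1]]], Y2 as [_ [_ [_ C2]]].
  apply infconv_ge_affine; [exact Hs | lra |]. intros x Hx.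
  rewrite (Rplus_comm _ ((1 - l) * infconv t)).
  apply infconv_ge_affine; [exact Ht | lra |]. intros y Hy.
  pose proof (infconv_le (l * s + (1 - l) * t) (l * x + (1 - l) * y) ltac:(nra)).
  pose proof (C1 x y l ltac:(lra) ltac:(lra) Hl).
  pose proof (C2 (s - x) (t - y) l ltac:(lra) ltac:(lra) Hl).
  replace (l * (s - x) + (1 - l) * (t - y))
    with (l * s + (1 - l) * t - (l * x + (1 - l) * y)) in * by ring.
  lra.
Qed.

Lemma infconv_young : young infconv.
Proof.
  split; [|split; [exact infconv_nonneg|]];
    [|split; [exact infconv_le_increasing | exact infconv_convex]].
  apply Rle_antisym; [|apply infconv_nonneg; lra].
  pose proof (infconv_le_Rmin 0 ltac:(lra)). destruct Y1 as [P10 _], Y2 as [P20 _].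
  rewrite P10, P20, Rmin_left in * by lra. lra.
Qed.

End InfimalConvolution.

Lemma doubling_Rmin (P1 P2 : R -> R) : young P1 -> young P2 ->
  doubling P1 -> doubling P2 -> doubling (fun t => Rmin (P1 t) (P2 t)).
Proof.
  intros [_ [N1 _]] [_ [N2 _]] [C1 [T1 D1]] [C2 [T2 D2]].
  exists (Rmax C1 C2), (Rmax 0 (Rmax T1 T2)). intros t Ht.
  pose proof (Rmax_l 0 (Rmax T1 T2)). pose proof (Rmax_r 0 (Rmax T1 T2)).
  pose proof (Rmax_l T1 T2). pose proof (Rmax_r T1 T2).
  pose proof (Rmax_l C1 C2). pose proof (Rmax_r C1 C2).
  pose proof (N1 t ltac:(lra)). pose proof (N2 t ltac:(lra)).
  pose proof (D1 t ltac:(lra)). pose proof (D2 t ltac:(lra)).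
  apply Rmin_le_scal_Rmin; nra.
Qed.

Lemma doubling_halving (M : R -> R) : (forall t, 0 <= t -> 0 <= M t) -> doubling M ->
  exists K T, 0 < K /\ 0 <= T /\ forall t, T <= t -> M t <= K * M (t / 2).
Proof.
  intros Hnn [C [T HC]]. exists (Rmax 1 C), (Rmax 0 (2 * T)).
  split; [pose proof (Rmax_l 1 C); lra|]. split; [apply Rmax_l|]. intros t Ht.
  pose proof (Rmax_l 0 (2 * T)). pose proof (Rmax_r 0 (2 * T)).
  pose proof (HC (t / 2) ltac:(lra)) as Hdbl. replace (2 * (t / 2)) with t in Hdbl by field.
  pose proof (Hnn (t / 2) ltac:(lra)). pose proof (Rmax_r 1 C). nra.
Qed.

Lemma doubling_of_comparable (Phi M : R -> R) K T :
  (forall t, T <= t -> Phi t <= M t) -> (forall t, T <= t -> 0 <= M t <= K * Phi t) ->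
  doubling M -> doubling Phi.
Proof.
  intros Hup Hlow [C [T' HC]]. exists (Rmax 0 C * K), (Rmax 0 (Rmax T T')). intros t Ht.
  pose proof (Rmax_l 0 (Rmax T T')). pose proof (Rmax_r 0 (Rmax T T')).
  pose proof (Rmax_l T T'). pose proof (Rmax_r T T').
  pose proof (Rmax_l 0 C). pose proof (Rmax_r 0 C).
  pose proof (Hup (2 * t) ltac:(lra)). pose proof (HC t ltac:(lra)). pose proof (Hlow t ltac:(lra)).
  rewrite Rmult_assoc. nra.
Qed.

(* Near infinity [1 / Phi <= K (1 / P1 + 1 / P2)]. *)
Lemma integrable_at_infty_inv_of_Rmin_le (Phi P1 P2 : R -> R) K T :
  young Phi -> young P1 -> young P2 ->
  integrable_at_infty_inv P1 -> integrable_at_infty_inv P2 ->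
  (forall t, T <= t -> Rmin (P1 t) (P2 t) <= K * Phi t) -> integrable_at_infty_inv Phi.
Proof.
  intros YPhi Y1 Y2 [a1 [Ha1 [Hpos1 Hint1]]] [a2 [Ha2 [Hpos2 Hint2]]] Hlow.
  set (a := Rmax T (Rmax a1 a2)).
  assert (HaT : T <= a) by apply Rmax_l.
  assert (Ha12 : a1 <= a /\ a2 <= a)
    by (pose proof (Rmax_r T (Rmax a1 a2)); pose proof (Rmax_l a1 a2);
        pose proof (Rmax_r a1 a2); unfold a; lra).
  assert (Hpos : forall t, a <= t -> 0 < Phi t).
  { intros t Ht. pose proof (Hlow t ltac:(lra)).
    assert (0 < Rmin (P1 t) (P2 t)) by (apply Rmin_pos; [apply Hpos1 | apply Hpos2]; lra).
    pose proof (proj1 (proj2 YPhi) t ltac:(lra)).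
    destruct (Req_dec (Phi t) 0) as [Hz | Hz]; [rewrite Hz in *; lra | lra]. }
  assert (Hex1 : forall u v, a1 <= u -> u <= v -> ex_RInt (fun t => / P1 t) u v)
    by (intros u v Hu Huv; apply ex_RInt_inv_young; [exact Y1 | lra | exact Huv |];
        intros t Ht; apply Hpos1; lra).
  assert (Hex2 : forall u v, a2 <= u -> u <= v -> ex_RInt (fun t => / P2 t) u v)
    by (intros u v Hu Huv; apply ex_RInt_inv_young; [exact Y2 | lra | exact Huv |];
        intros t Ht; apply Hpos2; lra).
  exists a. split; [pose proof (Rmax_l a1 a2); lra | split; [exact Hpos |]].
  apply (ex_RInt_gen_le_compat _ (fun t => K * (/ P1 t + / P2 t))).
  - intros t Ht. split; [apply Rlt_le, Rinv_0_lt_compat, Hpos, Ht|].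
    apply Rinv_le_of_Rmin_le; [apply Hpos | apply Hpos1 | apply Hpos2 | apply Hlow]; lra.
  - intros b Hb. apply ex_RInt_inv_young; [exact YPhi | lra | exact Hb |].
    intros t Ht; apply Hpos; lra.
  - intros b Hb.
    apply (ex_RInt_scal (V := R_NormedModule) (fun t => / P1 t + / P2 t)).
    apply (ex_RInt_plus (V := R_NormedModule)); [apply Hex1 | apply Hex2]; lra.
  - destruct (ex_RInt_gen_infty_shift _ a1 a
      (ex_RInt_swap _ _ _ (Hex1 a1 a ltac:(lra) ltac:(lra))) Hint1) as [l1 Hl1].
    destruct (ex_RInt_gen_infty_shift _ a2 a
      (ex_RInt_swap _ _ _ (Hex2 a2 a ltac:(lra) ltac:(lra))) Hint2) as [l2 Hl2].
    exists (scal K (plus l1 l2)).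
    apply (is_RInt_gen_scal (fun t => / P1 t + / P2 t)).
    apply (is_RInt_gen_plus (fun t => / P1 t) (fun t => / P2 t)); assumption.
Qed.

Theorem lemma3p5 (Phi1 Phi2 : R -> R) :
  young Phi1 -> doubling Phi1 -> integrable_at_infty_inv Phi1 ->
  young Phi2 -> doubling Phi2 -> integrable_at_infty_inv Phi2 ->
  exists Phi : R -> R,
    young Phi /\ doubling Phi /\
    (forall t, 0 <= t -> Phi t <= Rmin (Phi1 t) (Phi2 t)) /\
    integrable_at_infty_inv Phi /\
    (exists c T : R, 0 < c /\
       forall t, T <= t -> c * Rmin (Phi1 t) (Phi2 t) <= Phi t).
Proof.
  intros Y1 D1 I1 Y2 D2 I2.
  assert (Hmin_nonneg : forall t, 0 <= t -> 0 <= Rmin (Phi1 t) (Phi2 t))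
    by (intros t Ht; apply Rmin_glb; [apply Y1 | apply Y2]; exact Ht).
  destruct (doubling_halving (fun t => Rmin (Phi1 t) (Phi2 t)) Hmin_nonneg
              (doubling_Rmin Phi1 Phi2 Y1 Y2 D1 D2)) as [K [T [HK [HT Hhalf]]]].
  assert (Hlow : forall t, T <= t -> Rmin (Phi1 t) (Phi2 t) <= K * infconv Phi1 Phi2 t).
  { intros t Ht. eapply Rle_trans; [apply Hhalf, Ht|].
    apply Rmult_le_compat_l; [lra | apply infconv_ge_Rmin_half; [exact Y1 | exact Y2 | lra]]. }
  exists (infconv Phi1 Phi2). split; [|split; [|split; [|split]]].
  - apply infconv_young; assumption.
  - apply (doubling_of_comparable _ (fun t => Rmin (Phi1 t) (Phi2 t)) K T);
      [| | apply doubling_Rmin; assumption].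
    + intros t Ht. apply infconv_le_Rmin; [exact Y1 | exact Y2 | lra].
    + intros t Ht. split; [apply Hmin_nonneg; lra | apply Hlow, Ht].
  - apply infconv_le_Rmin; assumption.
  - apply (integrable_at_infty_inv_of_Rmin_le _ Phi1 Phi2 K T);
      [apply infconv_young | | | | |]; assumption.
  - exists (/ K), T. split; [apply Rinv_0_lt_compat, HK|]. intros t Ht.
    apply Rmult_le_reg_l with K; [exact HK|].
    rewrite <- Rmult_assoc, Rinv_r, Rmult_1_l by lra. apply Hlow, Ht.
Qed.
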